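(* Let $G$ be a finite indecomposable group. Then $G$ has Property A if and only if $G$ is Chermak-Delgado simple.
   Context: All groups are finite. A group is indecomposable if it cannot be written as a direct product $H \times K$ with $H \neq 1$ and $K \neq 1$. A group $G$ has Property A if for every non-trivial abelian normal subgroup $A$ of $G$, $|G/C_G(A)| > |A|$. For $H \leq G$, $m_G(H) = |H|\,|C_G(H)|$; $m^*(G) = \max\{ m_G(H) : H \leq G\}$; $\mathcal{CD}(G) = \{ H \leq G : m_G(H) = m^*(G)\}$. $G$ is Chermak-Delgado simple if $\mathcal{CD}(G) = \{1, G\}$. *)

From mathcomp Require Import all_boot all_fingroup.
Set Implicit Arguments. Unset Strict Implicit. Unset Printing Implicit Defensive.
Import GroupScope.
Local Open Scope group_scope.

Section CD.
Variable gT : finGroupType.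

(* G is indecomposable: no internal direct decomposition G = H \x K with
   H, K both nontrivial (equivalent to abstract G ~ H x K). *)
Definition indecomposable (G : {group gT}) : Prop :=
  ~ exists H K : {group gT}, [/\ H \x K = G, H :!=: 1 & K :!=: 1].

Definition propertyA (G : {group gT}) : Prop :=
  forall A : {group gT}, A <| G -> abelian A -> A :!=: 1 ->
    #|A| < #|G / 'C_G(A)|.

Definition mG (G H : {group gT}) : nat := #|H| * #|'C_G(H)|.

Definition mstar (G : {group gT}) : nat :=
  \max_(H : {group gT} | H \subset G) mG G H.

Definition CD (G : {group gT}) : {set {group gT}} :=
  [set H : {group gT} | (H \subset G) && (mG G H == mstar G)].

Definition CD_simple (G : {group gT}) : Prop :=
  CD G = [set 1%G; G].

End CD.

(* The measure m(H) = |H||C_G(H)| satisfies m(H) m(K) <= m(H :&: K) m(H <*> K),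
   so CD(G) is a lattice closed under conjugation and centralizers, and it
   contains Z(H) = H :&: C_G(H) along with H.  For normal A, Property A reads
   m(A) < |G| = m(1); so the least member of CD(G), being normal and abelian,
   is 1, and m*(G) = |G|.  Then G = X * C_G(X) for every member X, a direct
   product when Z(X) = 1, so such an X is 1 or G; through Z(X) this covers the
   normal members.  A minimal nontrivial member P < G is abelian, and some
   conjugate P^y does not centralize P (otherwise the core of C_G(P) is G and
   P <= Z(G) = 1).  Then D = P P^y is a member with Z(D) <= D :&: C_G(P) = P,
   so Z(D) = 1, D = G, and y in P P^y gives P^y = P. *)

From mathcomp Require Import all_boot all_fingroup all_solvable.
From mathcomp Require Import zify.
Set Implicit Arguments. Unset Strict Implicit. Unset Printing Implicit Defensive.
Import GroupScope.
Local Open Scope group_scope.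

Lemma leq_prod_sandwich (M a b p j : nat) : 0 < M -> 0 < j ->
  a <= M -> b <= M -> p <= j -> M * M * j <= p * a * b -> [/\ a = M, b = M & p = j].
Proof.
move=> M_gt0 j_gt0 le_aM le_bM le_pj le_prod.
have le_MM : M * M <= a * b by rewrite -(leq_pmul2r j_gt0); nia.
have [eq_aM eq_bM] : a = M /\ b = M by split; nia.
by rewrite eq_aM eq_bM in le_prod *; split=> //; nia.
Qed.

Section ChermakDelgadoLattice.
Variables (gT : finGroupType) (G : {group gT}).
Implicit Types H K : {group gT}.

Lemma mG_le_mstar H : H \subset G -> mG G H <= mstar G.
Proof. exact: (leq_bigmax_cond (P := fun H : {group gT} => H \subset G)). Qed.

Lemma mG1 : mG G 1 = #|G|.
Proof. by rewrite /mG cards1 mul1n cent1T setIT. Qed.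

Lemma CD_subG H : H \in CD G -> H \subset G.
Proof. by rewrite inE => /andP[]. Qed.

Lemma mG_CD H : H \in CD G -> mG G H = mstar G.
Proof. by rewrite inE => /andP[_ /eqP]. Qed.

Lemma CD_nonempty : exists H, H \in CD G.
Proof.
case: (@arg_maxnP _ 1%G (fun H : {group gT} => H \subset G) (mG G) (sub1G G)).
move=> H sHG maxH; exists H; rewrite inE sHG eqn_leq mG_le_mstar //=.
exact/bigmax_leqP.
Qed.

Lemma CDJ H y : H \in CD G -> y \in G -> (H :^ y)%G \in CD G.
Proof.
move=> HCD yG; rewrite inE conj_subG ?CD_subG // -(mG_CD HCD) /mG /=.
by rewrite cardJg centJ -{1}(conjGid yG) -conjIg cardJg.
Qed.

Lemma CD_cent H : H \in CD G -> 'C_G(H)%G \in CD G.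
Proof.
move=> HCD; rewrite inE subsetIl eqn_leq mG_le_mstar ?subsetIl //= -(mG_CD HCD).
rewrite /mG mulnC leq_mul2l subset_leq_card ?orbT //=.
by rewrite subsetI (CD_subG HCD) centsC subsetIr.
Qed.

Lemma mG_meet_join H K :
  mG G H * mG G K * #|H <*> K| <= #|H * K| * mG G (H :&: K) * mG G (H <*> K).
Proof.
have sCHK : 'C_G(H) * 'C_G(K) \subset 'C_G(H :&: K).
  by rewrite mul_subG // setIS // centS ?subsetIl ?subsetIr.
have eCY : 'C_G(H) :&: 'C_G(K) = 'C_G(H <*> K).
  by rewrite centY -setIIr.
have := mul_cardG 'C_G(H) 'C_G(K); rewrite eCY /mG => eC.
have eHK := mul_cardG H K.
have leC := subset_leq_card sCHK.
rewrite mulnACA eHK eC /= !mulnA -(mulnA _ #|H <*> K|) (mulnC #|H <*> K|) !mulnA.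
by rewrite !leq_mul2r leq_mul2l leC !orbT.
Qed.

Lemma CD_meet_join H K : H \in CD G -> K \in CD G ->
  [/\ (H :&: K)%G \in CD G, (H <*> K)%G \in CD G & H * K = H <*> K].
Proof.
move=> HCD KCD; have sHG := CD_subG HCD; have sKG := CD_subG KCD.
have sIG : H :&: K \subset G by rewrite subIset ?sHG.
have sJG : H <*> K \subset G by rewrite join_subG sHG.
have sHKJ : H * K \subset H <*> K by rewrite mulG_subG joing_subl joing_subr.
have M_gt0 : 0 < mstar G by rewrite -(mG_CD HCD) muln_gt0 !cardG_gt0.
have := mG_meet_join H K; rewrite (mG_CD HCD) (mG_CD KCD).
case/(leq_prod_sandwich M_gt0 (cardG_gt0 (H <*> K)) (mG_le_mstar sIG) (mG_le_mstar sJG)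
  (subset_leq_card sHKJ)) => eq_mI eq_mJ eq_pj.
rewrite !inE sIG sJG eq_mI eq_mJ eqxx; split=> //.
by apply/eqP; rewrite eqEcard sHKJ eq_pj /=.
Qed.

Lemma CD_center H : H \in CD G -> 'Z(H)%G \in CD G.
Proof.
move=> HCD; have [ICD _ _] := CD_meet_join HCD (CD_cent HCD).
suff -> : 'Z(H)%G = (H :&: 'C_G(H))%G by [].
by apply: group_inj; rewrite /= setIA (setIidPl (CD_subG HCD)).
Qed.

Section Extremal.
Variable M : {group gT}.
Hypothesis MCD : M \in CD G.

Lemma CD_min_normal : (forall H, H \in CD G -> #|M| <= #|H|) -> M <| G.
Proof.
move=> minM; rewrite /normal (CD_subG MCD); apply/normsP => y yG.
have [ICD _ _] := CD_meet_join MCD (CDJ MCD yG).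
have sMMy : M \subset M :^ y by apply/setIidPl/eqP; rewrite eqEcard subsetIl minM.
by apply/eqP; rewrite eq_sym eqEcard sMMy cardJg /=.
Qed.

Lemma CD_min_abelian : (forall H, H \in CD G -> #|M| <= #|H|) -> abelian M.
Proof.
by move=> minM; apply/center_idP/eqP; rewrite eqEcard center_sub minM ?CD_center.
Qed.

Lemma CD_max_in_normal (N : {group gT}) : G \subset 'N(N) -> M \subset N ->
  (forall H, H \in CD G -> H \subset N -> #|H| <= #|M|) -> M <| G.
Proof.
move=> nNG sMN maxM; rewrite /normal (CD_subG MCD); apply/normsP => y yG.
have [_ JCD _] := CD_meet_join MCD (CDJ MCD yG).
have sMyN : M :^ y \subset N by rewrite -(normsP nNG y yG) conjSg.
have sJN : M <*> (M :^ y) \subset N by rewrite join_subG sMN.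
have eMJ : M :=: M <*> (M :^ y) by apply/eqP; rewrite eqEcard joing_subl maxM.
by apply/eqP; rewrite eqEcard {2}eMJ joing_subr cardJg /=.
Qed.

End Extremal.

End ChermakDelgadoLattice.

Lemma ltn_card_quotient_cent (gT : finGroupType) (G A : {group gT}) :
  A <| G -> (#|A| < #|G / 'C_G(A)|) = (mG G A < #|G|).
Proof.
move=> nAG; rewrite card_quotient ?normsI ?normG ?norms_cent ?normal_norm //.
by rewrite -(Lagrange (subsetIl G 'C(A))) /mG mulnC ltn_pmul2l ?cardG_gt0.
Qed.

Lemma propertyA_CD_simple (gT : finGroupType) (G : {group gT}) :
  CD_simple G -> propertyA G.
Proof.
move=> CDsimpleG A nAG abA ntA; rewrite ltn_card_quotient_cent //.
have CD1 : 1%G \in CD G by rewrite CDsimpleG !inE eqxx.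
have CDG : G \in CD G by rewrite CDsimpleG !inE eqxx orbT.
have mstarG : mstar G = #|G| by rewrite -(mG_CD CD1) mG1.
have cGG1 : #|'C_G(G)| = 1%N.
  have := mG_CD CDG; rewrite mstarG /mG -{2}[#|G|]muln1 => /eqP.
  by rewrite eqn_pmul2l // => /eqP.
have sAG := normal_sub nAG.
rewrite -mstarG ltn_neqAle mG_le_mstar // andbT.
apply: contra ntA => /eqP mA.
have : A \in CD G by rewrite inE sAG mA eqxx.
rewrite CDsimpleG !inE => /orP[// | /eqP eAG].
by move: abA cGG1; rewrite eAG => /setIidPl -> /eqP; rewrite trivg_card1.
Qed.

Section PropertyA.
Variables (gT : finGroupType) (G : {group gT}).
Hypothesis pA : propertyA G.

Lemma CD_normal_abelian_trivial X : X \in CD G -> X <| G -> abelian X -> X :=: 1.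
Proof.
move=> XCD nXG abX; apply/eqP; apply: contraTT (mG_le_mstar (sub1G G)) => ntX.
by rewrite -ltnNge mG1 -(mG_CD XCD) -ltn_card_quotient_cent ?pA.
Qed.

Lemma center_propertyA : 'Z(G) = 1.
Proof.
apply/eqP; apply: contraT => ntZ.
have := pA (center_normal G) (center_abelian G) ntZ.
have cGZ : 'C_G('Z(G)) = G by apply/setIidPl; rewrite centsC subsetIr.
by rewrite ltn_card_quotient_cent ?center_normal // /mG cGZ ltnNge leq_pmull.
Qed.

Lemma mstar_propertyA : mstar G = #|G|.
Proof.
have [H HCD] := CD_nonempty G.
have [M MCD minM] := @arg_minnP _ H (mem (CD G)) (fun M : {group gT} => #|M|) HCD.
have M1 := CD_normal_abelian_trivial MCD (CD_min_normal MCD minM) (CD_min_abelian MCD minM).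
by rewrite -(mG_CD MCD) (group_inj M1) mG1.
Qed.

Lemma CD1_propertyA : 1%G \in CD G.
Proof. by rewrite inE sub1G mG1 mstar_propertyA eqxx. Qed.

Lemma CDG_propertyA : G \in CD G.
Proof.
by rewrite inE subxx mstar_propertyA /mG -/('Z(G)) center_propertyA cards1 muln1 eqxx.
Qed.

End PropertyA.

Lemma mem_mul_conjGid (gT : finGroupType) (H : {group gT}) y :
  y \in H * H :^ y -> H :^ y = H.
Proof.
case/mulsgP => a b aH bHy def_y.
have eHy : H :^ y = H :^ b by rewrite def_y conjsgM (conjGid aH).
by rewrite eHy conjGid // -(memJ_conjg H b b) conjgE mulKg -eHy.
Qed.

Section Indecomposable.
Variables (gT : finGroupType) (G : {group gT}).
Hypotheses (indG : indecomposable G) (pA : propertyA G).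

Lemma CD_center1_trivial_or_full X : X \in CD G -> 'Z(X) = 1 -> X :=: 1 \/ X :=: G.
Proof.
move=> XCD ZX1; have sXG := CD_subG XCD.
have tiXC : X :&: 'C_G(X) = 1 by rewrite setIA (setIidPl sXG).
have eXC : X * 'C_G(X) = G.
  have := mul_cardG X 'C_G(X)%G; rewrite /= tiXC cards1 muln1 -/(mG G X).
  rewrite (mG_CD XCD) (mstar_propertyA pA) => eCG.
  by apply/eqP; rewrite eqEcard mul_subG ?subsetIl //= eCG.
have [X1 | ntX] := eqVneq X 1%G; first by left; rewrite X1.
have [C1 | ntC] := eqVneq 'C_G(X)%G 1%G.
  by right; rewrite -eXC -[X in _ * X]/(gval 'C_G(X)%G) C1 mulg1.
by case: indG; exists X, 'C_G(X)%G; rewrite dprodE ?subsetIr.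
Qed.

Lemma CD_normal_trivial_or_full X : X \in CD G -> X <| G -> X :=: 1 \/ X :=: G.
Proof.
move=> XCD nXG; apply: CD_center1_trivial_or_full => //.
apply: (CD_normal_abelian_trivial pA) (CD_center XCD) _ (center_abelian X) => //.
exact: char_normal_trans (center_char X) nXG.
Qed.

Lemma normal_over_CD_full (N P : {group gT}) :
  N <| G -> P \in CD G -> P :!=: 1 -> P \subset N -> N :=: G.
Proof.
move=> nNG PCD ntP sPN.
have PN : (P \in CD G) && (P \subset N) by rewrite PCD.
have [X /andP[XCD sXN] maxX] :=
  @arg_maxnP _ P (fun X : {group gT} => (X \in CD G) && (X \subset N)) (fun X => #|X|) PN.
have nXG : X <| G.
  apply: (CD_max_in_normal XCD (normal_norm nNG) sXN) => H HCD sHN.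
  by apply: maxX; rewrite HCD.
case: (CD_normal_trivial_or_full XCD nXG) => [X1 | XG].
  by have := maxX P PN; rewrite X1 cards1 => /card_le1_trivg P1; rewrite P1 eqxx in ntP.
by apply/eqP; rewrite eqEsubset normal_sub //= -XG.
Qed.

Lemma CD_conj_not_cent P : P \in CD G -> P :!=: 1 ->
  exists2 y, y \in G & ~~ (P :^ y \subset 'C_G(P)).
Proof.
move=> PCD ntP; apply/exists_inP; apply: contraT => /exists_inPn cPPG.
have sPcore : P \subset gcore 'C_G(P) G.
  apply/bigcapsP => y yG; rewrite -sub_conjgV.
  by apply: negbNE; apply: cPPG; rewrite groupV.
have ncoreG : gcore 'C_G(P) G <| G.
  by rewrite /normal gcore_norm (subset_trans (gcore_sub _ _)) ?subsetIl.
have coreG := normal_over_CD_full ncoreG PCD ntP sPcore.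
have sPZ : P \subset 'Z(G).
  rewrite subsetI (CD_subG PCD) centsC.
  by rewrite (subset_trans _ (subsetIr G 'C(P))) // -{1}coreG gcore_sub.
by case/negP: ntP; rewrite -subG1 -(center_propertyA pA).
Qed.

Section MinimalNontrivialCD.
Variable P : {group gT}.
Hypotheses (PCD : P \in CD G) (ntP : P :!=: 1).
Hypothesis minP : forall X : {group gT}, X \in CD G -> X :!=: 1 -> #|P| <= #|X|.

Lemma minCD_abelian : P \proper G -> abelian P.
Proof.
move=> prP; have [ZP1 | ntZ] := eqVneq 'Z(P)%G 1%G.
  have [P1 | PG] := CD_center1_trivial_or_full PCD (congr1 val ZP1).
    by case/eqP: ntP.
  by move: prP; rewrite properE PG subxx andbF.
by apply/center_idP/eqP; rewrite eqEcard center_sub minP ?CD_center.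
Qed.

Lemma minCD_conj_sub_cent y : abelian P -> y \in G -> P :^ y \subset 'C_G(P).
Proof.
move=> abP yG; have sPC : P \subset 'C_G(P) by rewrite subsetI (CD_subG PCD).
apply: contraT => ncPy.
have PyCD := CDJ PCD yG.
have tiPyC : P :^ y :&: 'C_G(P) = 1.
  apply/eqP; apply: contraT => ntI.
  have [ICD _ _] := CD_meet_join PyCD (CD_cent PCD).
  have eI : P :^ y :&: 'C_G(P) = P :^ y.
    by apply/eqP; rewrite eqEcard subsetIl cardJg minP.
  by rewrite -eI subsetIr in ncPy.
have [_ DCD eD] := CD_meet_join PCD PyCD.
set D := P <*> (P :^ y) in DCD eD.
have DC : D :&: 'C_G(P) = P by rewrite -eD -group_modl // tiPyC mulg1.
have sZDP : 'Z(D) \subset P.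
  rewrite -DC subsetI center_sub subsetI (subset_trans (center_sub _) (CD_subG DCD)).
  exact: subset_trans (subsetIr _ _) (centS (joing_subl _ _)).
have ZD1 : 'Z(D) = 1.
  apply/eqP; apply: contraT => ntZ.
  have ZDP : 'Z(D) = P by apply/eqP; rewrite eqEcard sZDP minP ?CD_center.
  case/negP: ncPy; rewrite subsetI (CD_subG PyCD) centsC -{1}ZDP.
  exact: subset_trans (subsetIr _ _) (centS (joing_subr _ _)).
have [D1 | DG] := CD_center1_trivial_or_full DCD ZD1.
  by case/negP: ntP; rewrite -subG1 -D1 joing_subl.
have ePy : P :^ y = P by apply: mem_mul_conjGid; rewrite eD (DG : D = G).
by rewrite ePy sPC in ncPy.
Qed.

Lemma minCD_full : P :=: G.
Proof.
apply/eqP; rewrite eqEproper (CD_subG PCD) /=; apply: contraT; rewrite negbK => prP.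
have abP := minCD_abelian prP.
have [y yG] := CD_conj_not_cent PCD ntP.
by rewrite minCD_conj_sub_cent.
Qed.

End MinimalNontrivialCD.

Lemma CD_trivial_or_full H : H \in CD G -> H :=: 1 \/ H :=: G.
Proof.
move=> HCD; have [H1 | ntH] := eqVneq H 1%G; first by left; rewrite H1.
have HP : (H \in CD G) && (H :!=: 1) by rewrite HCD ntH.
have [P /andP[PCD ntP] minP] :=
  @arg_minnP _ H (fun X : {group gT} => (X \in CD G) && (X :!=: 1)) (fun X => #|X|) HP.
have PG := minCD_full PCD ntP (fun X XCD ntX => minP X (introT andP (conj XCD ntX))).
right; apply/eqP; rewrite eqEcard (CD_subG HCD) -PG minP //.
Qed.

Lemma CD_simple_propertyA : CD_simple G.
Proof.
apply/setP => H; apply/idP/idP => [HCD | ].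
  by apply/set2P; case: (CD_trivial_or_full HCD) => eH; [left | right]; apply: group_inj.
by case/set2P => ->; [exact: CD1_propertyA | exact: CDG_propertyA].
Qed.

End Indecomposable.

Theorem corollary1 (gT : finGroupType) (G : {group gT}) :
  indecomposable G -> (propertyA G <-> CD_simple G).
Proof.
move=> indG; split; first exact: CD_simple_propertyA.
exact: propertyA_CD_simple.
Qed.
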